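(* For every relaxed scenario $\mathscr{S}$, the strict orthology graph $\mathrm{sO}(\mathscr{S})$ is a cograph.
   Context: All trees are planted phylogenetic trees: a tree $T$ has a distinguished vertex $0_T$ of degree $1$ whose unique neighbor $\rho_T$ is the root, and every vertex other than $0_T$ and the leaves $L(T)$ has at least two children. For $x,y\in V(T)$ write $y\preceq_T x$ if $x$ lies on the path from $0_T$ to $y$; edges are written $uv$ with $v\prec_T u$. The order extends to $V(T)\cup E(T)$: for a vertex $x$ and an edge $e=uv$, $x\preceq_T e$ iff $x\preceq_T v$, and $e\preceq_T x$ iff $u\preceq_T x$; for edges, $uv\preceq_T ab$ iff $v\preceq_T b$. Two elements are comparable if one is $\preceq$ the other. $\mathrm{lca}_T$ denotes the last common ancestor. A time map for $T$ is $\tau_T\colon V(T)\to\mathbb{R}$ with $\tau_T(x)<\tau_T(y)$ whenever $x\prec_T y$. A relaxed scenario $\mathscr{S}=(T,S,\sigma,\mu,\tau_T,\tau_S)$ consists of a gene tree $T$ with time map $\tau_T$, a species tree $S$ with time map $\tau_S$, a map $\sigma\colon L(T)\to M$ with $M\subseteq L(S)$, and a map $\mu\colon V(T)\to V(S)\cup E(S)$ such that (S0) $\mu(x)=0_S$ iff $x=0_T$; (S1) $\mu(x)\in L(S)$ iff $x\in L(T)$, in which case $\mu(x)=\sigma(x)$; (S2) if $\mu(x)\in V(S)$ then $\tau_S(\mu(x))=\tau_T(x)$; (S3) if $\mu(x)=uv\in E(S)$ then $\tau_S(v)<\tau_T(x)<\tau_S(u)$. An edge $uv\in E(T)$ is an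 HGT-edge if $\mu(u)$ and $\mu(v)$ are incomparable in $S$. The strict orthology graph $\mathrm{sO}(\mathscr{S})$ has vertex set $L(T)$ and edges $xy$, $x\ne y$, such that $\mu(\mathrm{lca}_T(x,y))=\mathrm{lca}_S(\sigma(x),\sigma(y))$ and the path between $x$ and $y$ in $T$ contains no HGT-edge. A cograph is a graph with no induced path on four vertices. *)

From mathcomp Require Import all_boot.
From Stdlib Require Import Reals.

Set Implicit Arguments.
Unset Strict Implicit.
Unset Printing Implicit Defensive.

(** * Planted phylogenetic trees
    A tree on the finite vertex type [V] is given by its planted vertex [r0]
    (the vertex 0_T) and a parent map [par] with [par r0 = r0]; every vertex
    reaches [r0] by iterating [par]. *)

Section Trees.
Variable V : finType.
Variables (r0 : V) (par : V -> V).

(** [anc y x] : y ⪯ x, i.e. x lies on the path from r0 to y. *)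
Definition anc (y x : V) : Prop := exists n : nat, iter n par y = x.

Definition sanc (y x : V) : Prop := anc y x /\ y <> x.

Definition children (u : V) : {set V} := [set w | (w != r0) && (par w == u)].

Definition is_leaf (v : V) : bool := children v == set0.

Definition planted_tree : Prop :=
  par r0 = r0 /\
  (forall v : V, anc v r0) /\
  #|children r0| = 1%N /\
  (forall v : V, v <> r0 -> ~~ is_leaf v -> (2 <= #|children v|)%N).

Definition is_lca (x y z : V) : Prop :=
  anc x z /\ anc y z /\ (forall w, anc x w -> anc y w -> anc z w).

Definition time_map (tau : V -> R) : Prop :=
  forall x y : V, sanc x y -> (tau x < tau y)%R.

End Trees.

(** Elements of V(S) ∪ E(S): a vertex, or an edge uv (v ≺ u) represented by its
    lower endpoint v (so u = par v); well-formed only if v <> 0_S. *)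
Inductive loc (W : Type) : Type := LV of W | LE of W.
Arguments LV {W} _.
Arguments LE {W} _.

Section Loc.
Variable W : finType.
Variables (r0 : W) (par : W -> W).

Definition le_loc (a b : loc W) : Prop :=
  match a, b with
  | LV x, LV y => anc par x y
  | LV x, LE v => anc par x v          (* x ⪯ (par v) v  iff  x ⪯ v *)
  | LE v, LV x => anc par (par v) x    (* (par v) v ⪯ x  iff  par v ⪯ x *)
  | LE v, LE b => anc par v b          (* (par v) v ⪯ (par b) b iff v ⪯ b *)
  end.

Definition comparable_loc (a b : loc W) : Prop := le_loc a b \/ le_loc b a.

End Loc.

(** * Relaxed scenarios
    S = (T, S, σ, μ, τ_T, τ_S).  σ is given as a total map on V(T); only its
    values on leaves of T matter (by (S1) they are leaves of S). *)
Definition relaxed_scenario (VT VS : finType)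
    (r0T : VT) (parT : VT -> VT) (r0S : VS) (parS : VS -> VS)
    (sigma : VT -> VS) (mu : VT -> loc VS) (tauT : VT -> R) (tauS : VS -> R)
    : Prop :=
  planted_tree r0T parT /\
  planted_tree r0S parS /\
  time_map parT tauT /\
  time_map parS tauS /\
  (* μ maps into V(S) ∪ E(S): edge loci are genuine edges *)
  (forall x v, mu x = LE v -> v <> r0S) /\
  (forall x, mu x = LV r0S <-> x = r0T) /\
  (forall x, (exists s, mu x = LV s /\ is_leaf r0S parS s) <-> is_leaf r0T parT x) /\
  (forall x, is_leaf r0T parT x -> mu x = LV (sigma x)) /\
  (forall x s, mu x = LV s -> tauS s = tauT x) /\
  (forall x v, mu x = LE v -> (tauS v < tauT x)%R /\ (tauT x < tauS (parS v))%R).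

(** HGT-edge uv of T (represented by its lower endpoint v <> 0_T). *)
Definition hgt_edge (VT VS : finType) (parT : VT -> VT) (parS : VS -> VS)
    (mu : VT -> loc VS) (v : VT) : Prop :=
  ~ comparable_loc parS (mu (parT v)) (mu v).

(** The edges of the x–y path are the edges (par v) v with v ⪯ x or v ⪯ y and
    v strictly below lca_T(x,y). *)
Definition sO_edge (VT VS : finType)
    (parT : VT -> VT) (parS : VS -> VS)
    (sigma : VT -> VS) (mu : VT -> loc VS) (x y : VT) : Prop :=
  x <> y /\
  exists z : VT, is_lca parT x y z /\
    (exists s : VS, is_lca parS (sigma x) (sigma y) s /\ mu z = LV s) /\
    (forall v : VT, (anc parT x v \/ anc parT y v) -> sanc parT v z ->
                    ~ hgt_edge parT parS mu v).

Definition cograph (T : eqType) (vert : T -> Prop) (adj : T -> T -> Prop) : Prop :=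
  ~ exists a b c d : T,
      [/\ vert a, vert b, vert c & vert d] /\ uniq [:: a; b; c; d] /\
      [/\ adj a b, adj b c & adj c d] /\
      [/\ ~ adj a c, ~ adj b d & ~ adj a d].

From mathcomp Require Import all_boot.
From Stdlib Require Import Reals Lra Classical.

Set Implicit Arguments.
Unset Strict Implicit.
Unset Printing Implicit Defensive.

(* By the time consistency conditions (S2) and (S3), no gene-tree vertex can be
   mapped strictly above the image of its parent, so along an HGT-free path of
   T the map mu is monotone.  Consequently, if two leaves x, y have HGT-free
   paths up to a vertex z with mu(z) = s but xy is not an sO-edge, then sigma x
   and sigma y already have a common ancestor strictly below s.  For an induced
   path a - b - c - d this forces all three edges to have the same lca z, hence
   the same s = mu(z) = lca(sigma c, sigma d).  But sigma a has a common
   ancestor strictly below s with sigma c and another one with sigma d; these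
   are comparable, and the larger one is a common ancestor of sigma c and
   sigma d strictly below their lca. *)

Lemma exists_least_nat (P : nat -> Prop) n :
  P n -> exists m, P m /\ forall k, P k -> m <= k.
Proof.
elim/ltn_ind: n => n IH Pn.
have [[k Pk lt_kn] | no_smaller] := classic (exists2 k, P k & k < n).
  exact: IH Pk.
exists n; split=> // k Pk; rewrite leqNgt; apply/negP => lt_kn.
by apply: no_smaller; exists k.
Qed.

Section Trees.
Variables (V : finType) (par : V -> V).

Lemma anc_refl x : anc par x x.
Proof. by exists 0. Qed.

Lemma anc_trans x y z : anc par x y -> anc par y z -> anc par x z.
Proof. by move=> [n <-] [m <-]; exists (m + n); rewrite iterD. Qed.

Lemma anc_par x : anc par x (par x).
Proof. by exists 1. Qed.

Lemma anc_par_neq x y : anc par x y -> x <> y -> anc par (par x) y.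
Proof. by move=> [[|n] <-] // _; exists n; rewrite -iterSr. Qed.

Lemma anc_total x y z : anc par x y -> anc par x z -> anc par y z \/ anc par z y.
Proof.
move=> [n <-] [m <-]; have [le_nm | /ltnW le_mn] := leqP n m.
  by left; exists (m - n); rewrite -iterD subnK.
by right; exists (n - m); rewrite -iterD subnK.
Qed.

Lemma lca_exists r0 : (forall v, anc par v r0) -> forall x y, exists z, is_lca par x y z.
Proof.
move=> root x y; have [k xk] := root x.
have [n [yn n_min]] : exists n, anc par y (iter n par x) /\
    forall m, anc par y (iter m par x) -> n <= m.
  by apply: (@exists_least_nat _ k); rewrite xk.
exists (iter n par x); split; first by exists n.
split=> // _ [m <-] ym; exists (m - n).
by rewrite -iterD subnK ?n_min.
Qed.

Lemma lca_sym x y z : is_lca par x y z -> is_lca par y x z.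
Proof. by move=> [xz [yz z_min]]; split=> //; split=> // w yw xw; apply: z_min. Qed.

Variable tau : V -> R.
Hypothesis time : time_map par tau.

Lemma tau_anc x y : anc par x y -> (tau x <= tau y)%R.
Proof.
move=> xy; have [-> | /eqP ne] := eqVneq x y; first exact: Rle_refl.
exact/Rlt_le/time.
Qed.

Lemma anc_antisym x y : anc par x y -> anc par y x -> x = y.
Proof.
move=> xy yx; apply: NNPP => ne.
have := time (conj xy ne); have := time (conj yx (nesym ne)); lra.
Qed.

Lemma lca_no_split x y z s u v : is_lca par x y s ->
  sanc par u s -> sanc par v s -> anc par x u -> anc par z u ->
  anc par y v -> anc par z v -> False.
Proof.
move=> [_ [_ s_min]] [us ne_us] [vs ne_vs] xu zu yv zv.
have [uv | vu] := anc_total zu zv.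
  exact/ne_vs/(anc_antisym vs)/(s_min _ (anc_trans xu uv) yv).
exact/ne_us/(anc_antisym us)/(s_min _ xu (anc_trans yv vu)).
Qed.

End Trees.

Section Loci.
Variables (W : finType) (par : W -> W).

Lemma le_loc_refl a : le_loc par a a.
Proof. by case: a => x; apply: anc_refl. Qed.

Lemma le_loc_trans a b c : le_loc par a b -> le_loc par b c -> le_loc par a c.
Proof.
case: a => [x|x]; case: b => [y|y]; case: c => [z|z] /=; try exact: anc_trans.
- by move=> xy yz; apply: anc_trans xy (anc_trans (anc_par _ _) yz).
- by move=> xy yz; apply: anc_trans (anc_par _ _) (anc_trans xy yz).
- move=> xy yz; have [-> // | /eqP ne] := eqVneq x y.
  exact: anc_trans (anc_par_neq xy ne) (anc_trans (anc_par _ _) yz).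
Qed.

Definition loc_bot (a : loc W) : W := match a with LV x | LE x => x end.

Definition loc_top (a : loc W) : W := match a with LV x => x | LE v => par v end.

Lemma le_loc_top_bot a b : le_loc par a b -> a <> b -> anc par (loc_top a) (loc_bot b).
Proof.
case: a => [x|x]; case: b => [y|y] //= xy ne.
by apply: (anc_par_neq xy) => exy; apply: ne; rewrite exy.
Qed.

End Loci.

Section Scenario.
Variables (VT VS : finType) (r0T : VT) (parT : VT -> VT) (r0S : VS) (parS : VS -> VS).
Variables (sigma : VT -> VS) (mu : VT -> loc VS) (tauT : VT -> R) (tauS : VS -> R).
Hypothesis timeT : time_map parT tauT.
Hypothesis timeS : time_map parS tauS.
Hypothesis rootT : forall v, anc parT v r0T.
Hypothesis rootS : forall v, anc parS v r0S.
Hypothesis mu_leaf : forall x, is_leaf r0T parT x -> mu x = LV (sigma x).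
Hypothesis tau_mu_LV : forall x s, mu x = LV s -> tauS s = tauT x.
Hypothesis tau_mu_LE : forall x v, mu x = LE v ->
  (tauS v < tauT x)%R /\ (tauT x < tauS (parS v))%R.

Lemma tau_mu_bounds x :
  (tauS (loc_bot (mu x)) <= tauT x)%R /\ (tauT x <= tauS (loc_top parS (mu x)))%R.
Proof.
case E: (mu x) => [s|v] /=; first by rewrite (tau_mu_LV E); lra.
by have := tau_mu_LE E; lra.
Qed.

(* Were mu (parT w) strictly below mu w, its whole time span would precede that
   of mu w, contradicting tauT w < tauT (parT w). *)
Lemma le_mu_par w : comparable_loc parS (mu (parT w)) (mu w) ->
  le_loc parS (mu w) (mu (parT w)).
Proof.
case=> // le_pw; have [-> | ne] := classic (mu (parT w) = mu w).
  exact: le_loc_refl.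
have [par_w | /eqP ne_w] := eqVneq w (parT w); first by rewrite -par_w in ne.
have := timeT (conj (anc_par _ w) ne_w).
have := tau_anc timeS (le_loc_top_bot le_pw ne).
have := tau_mu_bounds w; have := tau_mu_bounds (parT w); lra.
Qed.

Lemma mu_neq_below w z s : sanc parT w z -> mu z = LV s -> mu w <> LV s.
Proof.
move=> wz mz mw; have := timeT wz.
by rewrite -(tau_mu_LV mz) -(tau_mu_LV mw); apply: Rlt_irrefl.
Qed.

Definition hgt_free x z :=
  forall v, anc parT x v -> sanc parT v z -> ~ hgt_edge parT parS mu v.

Lemma hgt_free_anc x y z : hgt_free x z -> anc parT x y -> hgt_free y z.
Proof. by move=> free xy v yv; apply: free; apply: anc_trans yv. Qed.

Lemma hgt_free_cat x y z : anc parT x y -> hgt_free x y -> hgt_free y z -> hgt_free x z.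
Proof.
move=> xy free_xy free_yz v xv vz.
have [vy | yv] := anc_total xv xy; last exact: free_yz.
have [evy | /eqP ne] := eqVneq v y; first by subst v; apply: free_yz (anc_refl _ _) vz.
exact: free_xy.
Qed.

Lemma le_mu_par_hgt_free x z w : hgt_free x z -> anc parT x w -> anc parT (parT w) z ->
  le_loc parS (mu w) (mu (parT w)).
Proof.
move=> free xw wz; have [<- | /eqP ne] := eqVneq w (parT w); first exact: le_loc_refl.
apply: le_mu_par; apply: NNPP; apply: free xw _.
split; first exact: anc_trans (anc_par _ _) wz.
by move=> ewz; subst z; exact/ne/(anc_antisym timeT (anc_par _ _) wz).
Qed.

Lemma le_mu_hgt_free x z u w : hgt_free x z ->
  anc parT x u -> anc parT u w -> anc parT w z -> le_loc parS (mu u) (mu w).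
Proof.
move=> free xu [k <-]; elim: k => [|k IH] /= kz; first exact: le_loc_refl.
have kz' := anc_trans (anc_par _ _) kz.
apply: le_loc_trans (IH kz') (le_mu_par_hgt_free free _ kz).
by apply: anc_trans xu _; exists k.
Qed.

Lemma common_anc_below_LV w p q s :
  le_loc parS (LV p) (mu w) -> le_loc parS (LV q) (mu w) ->
  le_loc parS (mu w) (LV s) -> mu w <> LV s ->
  exists2 u, sanc parS u s & anc parS p u /\ anc parS q u.
Proof.
case E: (mu w) => [u|v] /= pu qu us ne.
  by exists u => //; split=> // eus; rewrite eus in ne.
exists v => //; split; first exact: anc_trans (anc_par _ _) us.
move=> evs; have := tau_anc timeS us; have := tau_mu_LE E; rewrite evs; lra.
Qed.

Definition orthology_witness x y z s :=
  [/\ is_lca parT x y z, is_lca parS (sigma x) (sigma y) s, mu z = LV s,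
      hgt_free x z & hgt_free y z].

Lemma orthology_witness_sym x y z s :
  orthology_witness x y z s -> orthology_witness y x z s.
Proof. by case=> *; split=> //; apply: lca_sym. Qed.

Lemma sO_edgeP x y : sO_edge parT parS sigma mu x y <->
  x <> y /\ exists z s, orthology_witness x y z s.
Proof.
split=> [[ne [z [xyz [[s [s_lca mz]] free]]]] | [ne [z [s [xyz s_lca mz fx fy]]]]].
  by split=> //; exists z, s; split=> // v xv; apply: free; [left | right].
split=> //; exists z; split=> //; split; first by exists s.
by move=> v [xv | yv]; [apply: fx | apply: fy].
Qed.

Lemma not_sO_edge_witness x y : x <> y -> ~ sO_edge parT parS sigma mu x y ->
  forall z s, ~ orthology_witness x y z s.
Proof. by move=> ne nxy z s wxy; apply: nxy; apply/sO_edgeP; split=> //; exists z, s. Qed.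

Lemma sigma_anc_below_of_nonadjacent x y z s :
  is_leaf r0T parT x -> is_leaf r0T parT y ->
  (forall z' s', ~ orthology_witness x y z' s') -> mu z = LV s ->
  anc parT x z -> anc parT y z -> hgt_free x z -> hgt_free y z ->
  exists2 u, sanc parS u s & anc parS (sigma x) u /\ anc parS (sigma y) u.
Proof.
move=> Lx Ly nxy mz xz yz fx fy.
have le_mu_leaf t e : is_leaf r0T parT t -> hgt_free t z -> anc parT t e -> anc parT e z ->
    le_loc parS (LV (sigma t)) (mu e).
  by move=> Lt ft te ez; rewrite -mu_leaf //; apply: le_mu_hgt_free ft (anc_refl _ _) te ez.
have [l [xl [yl l_min]]] := lca_exists rootT x y.
have lz := l_min _ xz yz.
have [elz | /eqP ne] := eqVneq l z.
  subst l; have [t [xt [yt t_min]]] := lca_exists rootS (sigma x) (sigma y).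
  have := le_mu_leaf _ _ Lx fx xz (anc_refl _ _); have := le_mu_leaf _ _ Ly fy yz (anc_refl _ _).
  rewrite mz /= => ys xs; exists t => //; split; first exact: t_min.
  by move=> ets; subst t; apply: (nxy z s); split.
apply: (@common_anc_below_LV l); [exact: le_mu_leaf | exact: le_mu_leaf | |].
  by rewrite -mz; apply: le_mu_hgt_free fx xl lz (anc_refl _ _).
exact: mu_neq_below (conj lz ne) mz.
Qed.

Lemma witness_lca_not_below x y w z1 s1 z2 s2 :
  is_leaf r0T parT x -> is_leaf r0T parT y -> is_leaf r0T parT w ->
  orthology_witness x y z1 s1 -> orthology_witness y w z2 s2 ->
  (forall z s, ~ orthology_witness x w z s) -> ~ sanc parT z2 z1.
Proof.
move=> Lx Ly Lw [[xz1 [yz1 _]] s1_lca mz1 fx1 fy1] [[yz2 [wz2 _]] [ys2 [ws2 _]] mz2 _ fw2].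
move=> nxw [z21 ne21].
have fw1 : hgt_free w z1 := hgt_free_cat wz2 fw2 (hgt_free_anc fy1 yz2).
have [u us1 [xu wu]] :=
  sigma_anc_below_of_nonadjacent Lx Lw nxw mz1 xz1 (anc_trans wz2 z21) fx1 fw1.
have s21 : sanc parS s2 s1.
  split; first by have := le_mu_hgt_free fy1 yz2 z21 (anc_refl _ _); rewrite mz1 mz2.
  by move=> es; apply: (mu_neq_below (conj z21 ne21) mz1); rewrite mz2 es.
exact: (lca_no_split timeS s1_lca us1 s21 xu wu ys2 ws2).
Qed.

Lemma witness_lca_eq x y w z1 s1 z2 s2 :
  is_leaf r0T parT x -> is_leaf r0T parT y -> is_leaf r0T parT w ->
  orthology_witness x y z1 s1 -> orthology_witness y w z2 s2 ->
  (forall z s, ~ orthology_witness x w z s) -> z1 = z2.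
Proof.
move=> Lx Ly Lw W1 W2 nxw; apply: NNPP => ne.
have [[_ [yz1 _]] _ _ _ _] := W1; have [[yz2 _] _ _ _ _] := W2.
have [z12 | z21] := anc_total yz1 yz2.
  apply: (witness_lca_not_below Lw Ly Lx
            (orthology_witness_sym W2) (orthology_witness_sym W1)).
    by move=> z s /orthology_witness_sym; apply: nxw.
  by split.
by apply: (witness_lca_not_below Lx Ly Lw W1 W2 nxw); split=> // /esym.
Qed.

Lemma sO_cograph : cograph (fun x => is_leaf r0T parT x) (sO_edge parT parS sigma mu).
Proof.
move=> [a [b [c [d [[La Lb Lc Ld] [abcd [[Eab Ebc Ecd] [Nac Nbd Nad]]]]]]]].
move: abcd; rewrite /= !inE !negb_or -!andbA.
move=> /and5P [_ /eqP ac /eqP ad _ /andP [/eqP bd _]].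
have [_ [z [s W1]]] := proj1 (sO_edgeP _ _) Eab.
have [_ [z2 [s2 W2]]] := proj1 (sO_edgeP _ _) Ebc.
have [_ [z3 [s3 W3]]] := proj1 (sO_edgeP _ _) Ecd.
have nac := not_sO_edge_witness ac Nac.
have nad := not_sO_edge_witness ad Nad.
have ez2 := witness_lca_eq La Lb Lc W1 W2 nac.
have ez3 := witness_lca_eq Lb Lc Ld W2 W3 (not_sO_edge_witness bd Nbd).
subst z2 z3.
move: W1 W3 => [[az _] _ mz fa _] [[cz [dz _]] cds mz3 fc fd].
have es3 : s3 = s by move: mz3; rewrite mz => -[].
subst s3.
have [u1 us [au1 cu1]] := sigma_anc_below_of_nonadjacent La Lc nac mz az cz fa fc.
have [u2 vs [au2 du2]] := sigma_anc_below_of_nonadjacent La Ld nad mz az dz fa fd.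
exact: (lca_no_split timeS cds us vs cu1 au1 du2 au2).
Qed.

End Scenario.

Theorem lemma35 (VT VS : finType)
    (r0T : VT) (parT : VT -> VT) (r0S : VS) (parS : VS -> VS)
    (sigma : VT -> VS) (mu : VT -> loc VS) (tauT : VT -> R) (tauS : VS -> R) :
  relaxed_scenario r0T parT r0S parS sigma mu tauT tauS ->
  cograph (fun x : VT => is_leaf r0T parT x) (sO_edge parT parS sigma mu).
Proof.
move=> [[_ [rootT _]] [[_ [rootS _]] [timeT [timeS [_ [_ [_ [mu_leaf [tau_LV tau_LE]]]]]]]]].
exact: sO_cograph timeT timeS rootT rootS mu_leaf tau_LV tau_LE.
Qed.
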